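(* Let $n\ge 11$ and let $G$ be a connected bidegreed graph of order $n$ with maximum degree $n-1$, and let $k=|M(G)|$. Then $$cM_2(G)\le k(n-k)\left((n-1)^2-k^2\right),$$ with equality if and only if $G$ is isomorphic to $K_k+\overline{K}_{n-k}$. Also, the inequality $$cM_2(G)\le \epsilon\, n^2(1-\epsilon)\left((n-1)^2-\epsilon^2n^2\right)$$ holds for some real $\epsilon$ lying between $372/1000$ and $392/1000$.
   Context: All graphs are finite and simple. For a graph $G$ and a vertex $u$, $d_u(G)$ denotes the degree of $u$ in $G$. The complementary second Zagreb index of $G$ is $cM_2(G)=\sum_{uv\in E(G)}\left|(d_u(G))^2-(d_v(G))^2\right|$. $M(G)$ denotes the set of vertices of $G$ having the maximum degree of $G$. A graph is bidegreed if the set of distinct vertex degrees has exactly two elements. $K_m$ is the complete graph on $m$ vertices, $\overline{H}$ is the complement of $H$, and $H_1+H_2$ (the join) is the graph on the disjoint union $V(H_1)\cup V(H_2)$ with edge set $E(H_1)\cup E(H_2)\cup\{h_1h_2: h_1\in V(H_1),h_2\in V(H_2)\}$. *)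

From HB Require Import structures.
From mathcomp Require Import all_boot all_order all_algebra.
From mathcomp Require Import reals.
Set Implicit Arguments. Unset Strict Implicit. Unset Printing Implicit Defensive.
Import Order.TTheory GRing.Theory Num.Theory.

(* A simple graph on a finite type T is a symmetric irreflexive relation e. *)
Section Graphs.
Variable T : finType.
Variable e : rel T.

Definition deg (u : T) : nat := #|[set v | e u v]|.
Definition maxdeg : nat := \max_(u : T) deg u.
Definition Mset : {set T} := [set u | deg u == maxdeg].
Definition bidegreed : Prop := size (undup [seq deg u | u <- enum T]) = 2.
Definition connected : Prop := forall u v : T, connect e u v.
(* cM_2(G) = sum over (unordered) edges uv of |d_u^2 - d_v^2|;
   computed as half the sum over ordered adjacent pairs (u,v). *)
Definition absdiff (a b : nat) : nat := (a - b) + (b - a).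
Definition cM2 : nat :=
  (\sum_(u : T) \sum_(v : T | e u v) absdiff (deg u ^ 2) (deg v ^ 2)) %/ 2.
End Graphs.

Definition completeG (m : nat) : rel 'I_m := fun i j => i != j.
Definition emptyG (m : nat) : rel 'I_m := fun _ _ => false.

Definition join (T1 T2 : finType) (e1 : rel T1) (e2 : rel T2) : rel (T1 + T2)%type :=
  fun x y => match x, y with
             | inl a, inl b => e1 a b
             | inr a, inr b => e2 a b
             | _, _ => true
             end.

Definition isomorphic (T1 T2 : finType) (e1 : rel T1) (e2 : rel T2) : Prop :=
  exists f : T1 -> T2, bijective f /\ forall x y, e1 x y = e2 (f x) (f y).

From HB Require Import structures.
From mathcomp Require Import all_boot all_order all_algebra.
From mathcomp Require Import reals.
From mathcomp Require Import ring lra zify.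
Import Order.TTheory GRing.Theory Num.Theory.

Set Implicit Arguments. Unset Strict Implicit. Unset Printing Implicit Defensive.

(* A vertex of degree n - 1 is adjacent to every other vertex, so each vertex
   outside M is adjacent to all of M; as G is bidegreed, all of them share one
   degree d with k <= d < n - 1.  Only the k (n - k) edges between M and its
   complement contribute to cM2, each with (n - 1)^2 - d^2, hence
   cM2 = k (n - k) ((n - 1)^2 - d^2): this is maximal exactly when d = k, i.e.
   when the vertices outside M are adjacent exactly to M, which is K_k + co-K_(n-k).
   For the second bound, f x = x (n - x) ((n - 1)^2 - x^2) increases on
   [0, 0.372 n] and decreases on [0.392 n, n - 2] (the sign of its divided
   difference), so f k <= f (eps n) = eps n^2 (1 - eps) ((n - 1)^2 - eps^2 n^2)
   for eps the point of [0.372, 0.392] closest to k / n. *)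

Lemma size_undup2_other (T : eqType) (s : seq T) (a : T) :
  size (undup s) = 2 -> a \in s ->
  exists2 b, b != a & b \in s /\ {subset s <= [:: a; b]}.
Proof.
move=> s2; rewrite -mem_undup => a_s.
suff [b ba [b_s sub]] : exists2 b, b != a & b \in undup s /\ {subset undup s <= [:: a; b]}.
  by exists b => //; split=> [|x x_s]; [rewrite -mem_undup | rewrite sub ?mem_undup].
have := undup_uniq s.
case: (undup s) s2 a_s => [|p [|q [|]]] //= _ a_s; rewrite !inE andbT => pq.
exists (if a == p then q else p).
  by move: a_s pq; rewrite !inE; case: eqP => [->|_ /eqP->] //; rewrite eq_sym.
split; first by case: ifP; rewrite !inE eqxx ?orbT.
move=> x; rewrite !inE.
by move: a_s; rewrite !inE; case: eqP => [->|_ /eqP->]; rewrite ?eqxx // orbC.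
Qed.

Section Degrees.
Variables (T : finType) (e : rel T).
Hypothesis eirr : irreflexive e.

Lemma nbr_subC1 u : [set v | e u v] \subset [set~ u].
Proof. by apply/subsetP => v; rewrite !inE; apply: contraTneq => ->; rewrite eirr. Qed.

Lemma deg_le_card u : deg e u <= #|T|.-1.
Proof. by rewrite /deg -(cardsC1 u) subset_leq_card ?nbr_subC1. Qed.

Lemma nbr_full u : deg e u = #|T|.-1 -> [set v | e u v] = [set~ u].
Proof. by move=> du; apply/eqP; rewrite eqEcard nbr_subC1 cardsC1 -du leqnn. Qed.

Lemma maxdeg_attained : 0 < #|T| -> exists u, deg e u = maxdeg e.
Proof.
by move=> T_gt0; have [u du] := bigop.eq_bigmax (deg e) T_gt0; exists u; rewrite /maxdeg du.
Qed.

Lemma Mset_nonempty : 0 < #|T| -> exists u, u \in Mset e.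
Proof.
by move=> T_gt0; have [u du] := maxdeg_attained T_gt0; exists u; rewrite inE du.
Qed.

End Degrees.

Section Isomorphism.
Variables (T1 T2 : finType) (e1 : rel T1) (e2 : rel T2).

Lemma deg_isomorphic (f : T1 -> T2) x :
  bijective f -> (forall y z, e1 y z = e2 (f y) (f z)) -> deg e1 x = deg e2 (f x).
Proof.
move=> f_bij ef; rewrite /deg -(on_card_preimset (f := f) (R := [set z | e2 (f x) z])).
  by apply: eq_card => y; rewrite !inE ef.
exact: onW_bij.
Qed.

Lemma deg_join_inr b : deg (join e1 e2) (inr b) = #|T1| + deg e2 b.
Proof.
rewrite /deg -!sum1_card big_sumType /=.
by congr (_ + _); apply: eq_bigl => i; rewrite !inE.
Qed.

End Isomorphism.

Lemma deg_emptyG m (j : 'I_m) : deg (@emptyG m) j = 0.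
Proof. by rewrite /deg; apply/eqP; rewrite cards_eq0; apply/eqP/setP => i; rewrite !inE. Qed.

Section MaxDegree.
Variables (T : finType) (e : rel T).
Hypotheses (esym : symmetric e) (eirr : irreflexive e) (maxdegE : maxdeg e = #|T|.-1).

Local Notation M := (Mset e).

Lemma in_Mset u : (u \in M) = (deg e u == #|T|.-1).
Proof. by rewrite inE maxdegE. Qed.

Lemma Mset_adj u v : u \in M -> v != u -> e u v.
Proof.
by rewrite in_Mset => /eqP/(nbr_full eirr)/setP/(_ v); rewrite !inE => ->.
Qed.

Lemma Mset_sub_nbr u : u \notin M -> M \subset [set v | e u v].
Proof.
move=> uM; apply/subsetP => v vM; rewrite inE esym Mset_adj //.
by apply: contraNneq uM => ->.
Qed.

Lemma card_Mset_le_deg u : u \notin M -> #|M| <= deg e u.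
Proof. by move/Mset_sub_nbr/subset_leq_card. Qed.

Lemma bidegreed_nonmax_deg : 0 < #|T| -> bidegreed e ->
  exists2 d, (forall u, u \notin M -> deg e u = d) & exists w, w \notin M.
Proof.
move=> T_gt0; rewrite /bidegreed; set s := [seq deg e u | u <- enum T] => s2.
have in_s u : deg e u \in s by apply: map_f; rewrite mem_enum.
have [u uM] := Mset_nonempty e T_gt0.
have [d dmax [/mapP[w _ dw] s_sub]] := size_undup2_other s2 (in_s u).
move: uM; rewrite in_Mset => /eqP du; rewrite du in dmax s_sub.
exists d; last by exists w; rewrite in_Mset -dw.
move=> v vM; have := s_sub _ (in_s v); rewrite !inE -in_Mset (negbTE vM).
by move/eqP.
Qed.

Variables (d : nat) (w : T).
Hypotheses (deg_nonM : forall u, u \notin M -> deg e u = d) (w_nonM : w \notin M).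

Lemma degE u : deg e u = if u \in M then #|T|.-1 else d.
Proof. by case: ifPn => [|/deg_nonM //]; rewrite in_Mset => /eqP. Qed.

Lemma card_Mset_le : #|M| <= d.
Proof. by rewrite -(deg_nonM w_nonM) card_Mset_le_deg. Qed.

Lemma nonmax_deg_lt : d < #|T|.-1.
Proof.
by rewrite ltn_neqAle -(deg_nonM w_nonM) -in_Mset w_nonM deg_le_card.
Qed.

Lemma card_Mset_lt : #|M| < #|T|.
Proof. by rewrite -cardsT; apply/proper_card/properP; split; [exact: subsetT | exists w]. Qed.

Lemma cross_nbrE u :
  [set v | e u v & (u \in M) != (v \in M)] = if u \in M then ~: M else M.
Proof.
apply/setP => v; rewrite in_set.
case: ifPn => uM; case: (boolP (v \in M)) => vM; rewrite ?in_setC ?vM ?andbF ?andbT //=.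
  by rewrite Mset_adj //; apply: contraNneq vM => ->.
by rewrite esym Mset_adj //; apply: contraNneq uM => ->.
Qed.

Lemma cM2_bidegreed : cM2 e = #|M| * (#|T| - #|M|) * (#|T|.-1 ^ 2 - d ^ 2).
Proof.
set k := #|M|; set D := #|T|.-1 ^ 2 - d ^ 2.
have cardMC : #|~: M| = #|T| - k by rewrite cardsCs setCK.
have d2_le : d ^ 2 <= #|T|.-1 ^ 2 by rewrite leq_sqr ltnW // nonmax_deg_lt.
have inner u : \sum_(v | e u v) absdiff (deg e u ^ 2) (deg e v ^ 2)
    = (if u \in M then #|T| - k else k) * D.
  have -> : (if u \in M then #|T| - k else k) = #|[set v | e u v & (u \in M) != (v \in M)]|.
    by rewrite cross_nbrE -cardMC; case: ifP.
  rewrite -sum_nat_cond_const big_mkcondr /=.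
  apply: eq_bigr => v _; rewrite !degE /absdiff /D.
  by case: (u \in M); case: (v \in M); rewrite /= ?subnn // (eqP d2_le) ?addn0.
rewrite /cM2 (eq_bigr _ (fun u _ => inner u)) (bigID (mem M)) /=.
rewrite [X in X + _](eq_bigr (fun _ => (#|T| - k) * D)) => [|u ->//].
rewrite [X in _ + X](eq_bigr (fun _ => k * D)) => [|u /negbTE->//].
rewrite !sum_nat_const -/k.
have -> : #|(fun u : T => u \notin M)| = #|T| - k.
  by rewrite -cardMC; apply: eq_card => u; rewrite in_setC.
have -> : k * ((#|T| - k) * D) + (#|T| - k) * (k * D) = 2 * (k * (#|T| - k) * D) by ring.
by rewrite mulKn.
Qed.

Lemma edge_joinE : d = #|M| ->
  forall x y, e x y = if x \in M then y != x else y \in M.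
Proof.
move=> dE x y; case: ifPn => xM.
  by apply/idP/idP => [|/(Mset_adj xM)//]; apply: contraTneq => ->; rewrite eirr.
have /eqP nbrE : M == [set v | e x v].
  by rewrite eqEcard Mset_sub_nbr //= -[#|[set _ | _]|]/(deg e x) deg_nonM // dE.
by rewrite nbrE inE.
Qed.

Lemma isomorphic_join_of_deg : d = #|M| ->
  isomorphic e (join (@completeG #|M|) (@emptyG (#|T| - #|M|))).
Proof.
move=> dE; have [u0 u0M] := Mset_nonempty e (leq_ltn_trans (leq0n _) card_Mset_lt).
have wMC : w \in ~: M by rewrite in_setC.
have cardMC : #|~: M| = #|T| - #|M| by rewrite cardsCs setCK.
pose f x := if x \in M then inl (enum_rank_in u0M x)
            else inr (cast_ord cardMC (enum_rank_in wMC x)).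
have f_inj : injective f.
  move=> x y; rewrite /f; case: ifPn => xM; case: ifPn => yM // [] fxy.
    by rewrite -(enum_rankK_in u0M xM) fxy enum_rankK_in.
  have xMC : x \in ~: M by rewrite in_setC.
  have yMC : y \in ~: M by rewrite in_setC.
  by rewrite -(enum_rankK_in wMC xMC) (val_inj fxy) enum_rankK_in.
exists f; split.
  apply: inj_card_bij f_inj _.
  by rewrite card_sum !card_ord subnKC // ltnW // card_Mset_lt.
move=> x y; rewrite edge_joinE // /f /join /completeG /emptyG.
case: ifPn => xM; case: ifPn => yM //.
- by rewrite (inj_in_eq (can_in_inj (enum_rankK_in u0M))) // eq_sym.
- by apply: contraNneq yM => ->.
Qed.

Lemma deg_of_isomorphic_join :
  isomorphic e (join (@completeG #|M|) (@emptyG (#|T| - #|M|))) -> d = #|M|.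
Proof.
case=> f [f_bij ef]; have [g fK gK] := f_bij.
have j : 'I_(#|T| - #|M|).
  by apply: (Ordinal (n := #|T| - #|M|) (m := 0)); rewrite subn_gt0 card_Mset_lt.
have deg_gj : deg e (g (inr j)) = #|M|.
  by rewrite (deg_isomorphic _ f_bij ef) gK deg_join_inr deg_emptyG card_ord addn0.
have gjM : g (inr j) \notin M.
  rewrite in_Mset deg_gj; apply: contraTneq card_Mset_le => ->.
  by rewrite -ltnNge nonmax_deg_lt.
by rewrite -(deg_nonM gjM) deg_gj.
Qed.

Lemma isomorphic_joinP :
  isomorphic e (join (@completeG #|M|) (@emptyG (#|T| - #|M|))) <-> d = #|M|.
Proof. by split; [exact: deg_of_isomorphic_join | exact: isomorphic_join_of_deg]. Qed.

End MaxDegree.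

Local Open Scope ring_scope.

Definition bideg_cM2 {R : pzRingType} (n k d : R) : R :=
  k * (n - k) * ((n - 1) ^+ 2 - d ^+ 2).

Definition bideg_slope {R : pzRingType} (n x y : R) : R :=
  (n - (x + y)) * ((n - 1) ^+ 2 - (x + y) ^+ 2) - x * y * (2 * (x + y) - n).

Lemma bideg_cM2_secant (R : comPzRingType) (n x y : R) :
  bideg_cM2 n y y - bideg_cM2 n x x = (y - x) * bideg_slope n x y.
Proof. rewrite /bideg_cM2 /bideg_slope; ring. Qed.

Lemma bideg_slope_ge0 (R : realFieldType) (n x : R) :
  11 <= n -> 0 <= x -> x <= 372/1000 * n -> 0 <= bideg_slope n x (372/1000 * n).
Proof.
move=> n_ge11 x_ge0 le_xa; set a := 372/1000 * n in le_xa *.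
have -> : bideg_slope n x a = bideg_slope n a a
    + (a - x) * ((n - 1) ^+ 2 + x * (n - x - 2 * a) + a * (2 * n - 3 * a)).
  rewrite /bideg_slope; ring.
have slope_aa : 0 <= bideg_slope n a a by rewrite /bideg_slope /a; nra.
apply: addr_ge0 => //; apply: mulr_ge0; first lra.
have : - (116/1000 * n) * a <= x * (n - x - 2 * a) by rewrite /a in le_xa *; nra.
rewrite /a; nra.
Qed.

Lemma bideg_slope_le0_below (R : realFieldType) (n u : R) :
  11 <= n -> 1 <= u -> u <= 216/1000 * n ->
  bideg_slope n (392/1000 * n) (n - u - 392/1000 * n) <= 0.
Proof.
move=> n_ge11 u_ge1 le_uw; set b := 392/1000 * n.
have -> : bideg_slope n b (n - u - b)
    = u * (u - 1) * (2 * n - 1 - u) - b * (n - u - b) * (n - 2 * u).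
  rewrite /bideg_slope; ring.
rewrite subr_le0.
have drop_lower : u * (u - 1) * (2 * n - 1 - u) <= u * u * (2 * n - u) by nra.
apply: (le_trans drop_lower).
set w := 216/1000 * n in le_uw *.
have cubic_mono : u * u * (2 * n - u) <= w * w * (2 * n - w).
  rewrite -subr_ge0.
  have -> : w * w * (2 * n - w) - u * u * (2 * n - u) =
      (w - u) * (2 * n * (w + u) - (w * w + w * u + u * u)) by ring.
  apply: mulr_ge0; rewrite /w in le_uw *; nra.
have at_w : w * w * (2 * n - w) <= b * (n - w - b) * (n - 2 * w) by rewrite /w /b; nra.
have quad_anti : (n - w - b) * (n - 2 * w) <= (n - u - b) * (n - 2 * u).
  by apply: ler_pM; rewrite /w /b in le_uw *; lra.
have b_ge0 : 0 <= b by rewrite /b; lra.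
apply: (le_trans cubic_mono); apply: (le_trans at_w).
by move: (ler_wpM2l b_ge0 quad_anti); rewrite !mulrA.
Qed.

(* The three cases are b + x >= n, n - 1 <= b + x < n and b + x < n - 1;
   in the last one u := n - (b + x) <= n - 2 b = 216/1000 * n. *)
Lemma bideg_slope_le0 (R : realFieldType) (n x : R) :
  11 <= n -> 392/1000 * n <= x -> x <= n - 2 -> bideg_slope n (392/1000 * n) x <= 0.
Proof.
move=> n_ge11 le_bx le_x; set b := 392/1000 * n in le_bx *.
have [ge_s|lt_s] := lerP n (b + x).
  set v := b + x - n.
  have -> : bideg_slope n b x
      = v * (v + 1) * (2 * n + v - 1) - b * (n + v - b) * (n + 2 * v).
    rewrite /bideg_slope /v; ring.
  rewrite subr_le0.
  have v_ge0 : 0 <= v by rewrite /v; lra.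
  have lt_vb : v + 1 <= b by rewrite /v; lra.
  have le_vb : v * (v + 1) * (2 * n + v - 1) <= v * b * (2 * n + v - 1).
    by apply: ler_wpM2r; nra.
  have : v * (2 * n + v - 1) <= (n + v - b) * (n + 2 * v) by rewrite /b in lt_vb *; nra.
  rewrite /b in lt_vb le_vb *; nra.
have [ge_s1|lt_s1] := lerP (n - 1) (b + x).
  have : (n - (b + x)) * ((n - 1) ^+ 2 - (b + x) ^+ 2) <= 0.
    by apply: mulr_ge0_le0; rewrite ?subr_ge0 ?subr_le0 ?ler_sqr ?nnegrE; lra.
  have : 0 <= b * x * (2 * (b + x) - n) by rewrite !mulr_ge0 //; rewrite /b in le_bx *; lra.
  rewrite /bideg_slope; lra.
set u := n - (b + x).
have -> : x = n - u - b by rewrite /u; ring.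
by apply: bideg_slope_le0_below; rewrite /u /b in le_bx lt_s1 *; lra.
Qed.

Lemma bideg_cM2_scaled (R : comPzRingType) (n eps : R) :
  bideg_cM2 n (eps * n) (eps * n)
  = eps * n ^+ 2 * (1 - eps) * ((n - 1) ^+ 2 - eps ^+ 2 * n ^+ 2).
Proof. rewrite /bideg_cM2; ring. Qed.

Lemma bideg_cM2_eps_bound (R : realFieldType) (n x : R) :
  11 <= n -> 0 <= x -> x <= n - 2 ->
  exists eps : R, 372/1000 <= eps <= 392/1000 /\
    bideg_cM2 n x x <= eps * n ^+ 2 * (1 - eps) * ((n - 1) ^+ 2 - eps ^+ 2 * n ^+ 2).
Proof.
move=> n_ge11 x_ge0 le_x; have n_gt0 : 0 < n by lra.
have [lt_x_a|le_a_x] := ltrP x (372/1000 * n).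
  exists (372/1000); split; first lra.
  rewrite -bideg_cM2_scaled -subr_ge0 bideg_cM2_secant.
  by apply: mulr_ge0; [rewrite subr_ge0 ltW | apply: bideg_slope_ge0; rewrite // ltW].
have [lt_b_x|le_x_b] := ltrP (392/1000 * n) x.
  exists (392/1000); split; first lra.
  rewrite -bideg_cM2_scaled -subr_le0 bideg_cM2_secant.
  by apply: mulr_ge0_le0; [rewrite subr_ge0 ltW | apply: bideg_slope_le0; rewrite // ltW].
exists (x / n); split.
  by rewrite ler_pdivlMr ?ler_pdivrMr //; lra.
by rewrite -bideg_cM2_scaled divfK ?gt_eqF.
Qed.

Lemma natr_bideg_cM2 (R : comPzRingType) (n k d : nat) :
  (k <= n)%N -> (d <= n.-1)%N -> (0 < n)%N ->
  (k * (n - k) * (n.-1 ^ 2 - d ^ 2))%N%:R = bideg_cM2 n%:R k%:R d%:R :> R.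
Proof.
case: n => // n le_kn le_dn _.
by rewrite /bideg_cM2 !natrM !natrB ?leq_sqr // !natrX /= -natr1 addrK.
Qed.

Lemma bideg_cM2_le (R : realDomainType) (n k d : R) :
  0 <= k -> k <= d -> k <= n -> bideg_cM2 n k d <= bideg_cM2 n k k.
Proof.
move=> k_ge0 le_kd le_kn; rewrite ler_wpM2l ?mulr_ge0 ?subr_ge0 //.
by rewrite lerD2l lerN2 lerXn2r // nnegrE (le_trans k_ge0).
Qed.

Lemma bideg_cM2_eq (R : realDomainType) (n k d : R) :
  0 < k -> k < n -> 0 <= d -> (bideg_cM2 n k d == bideg_cM2 n k k) = (d == k).
Proof.
move=> k_gt0 lt_kn d_ge0.
have kn_neq0 : k * (n - k) != 0 by rewrite mulf_neq0 ?gt_eqF ?subr_gt0.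
rewrite /bideg_cM2 (inj_eq (mulfI kn_neq0)) (inj_eq (addrI _)) (inj_eq oppr_inj).
by rewrite eqrXn2 // ltW.
Qed.

Theorem proposition4 (R : realType) (T : finType) (e : rel T) (n : nat) :
  symmetric e -> irreflexive e ->
  #|T| = n -> (11 <= n)%N ->
  connected e -> bidegreed e -> maxdeg e = n.-1 ->
  let k := #|Mset e| in
  ((cM2 e)%:Z <= k%:Z * (n%:Z - k%:Z) * ((n%:Z - 1) ^+ 2 - k%:Z ^+ 2))
  /\ ((cM2 e)%:Z = k%:Z * (n%:Z - k%:Z) * ((n%:Z - 1) ^+ 2 - k%:Z ^+ 2)
      <-> isomorphic e (join (@completeG k) (@emptyG (n - k))))
  /\ (exists eps : R, 372 / 1000 <= eps <= 392 / 1000 /\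
        (cM2 e)%:R <= eps * n%:R ^+ 2 * (1 - eps) * ((n%:R - 1) ^+ 2 - eps ^+ 2 * n%:R ^+ 2)).
Proof.
move=> esym eirr <- n_ge11 _ bideg maxdegE k.
have T_gt0 : (0 < #|T|)%N by apply: leq_trans n_ge11.
have [d deg_nonM [w w_nonM]] := bidegreed_nonmax_deg maxdegE T_gt0 bideg.
have le_kd : (k <= d)%N := card_Mset_le esym eirr maxdegE deg_nonM w_nonM.
have lt_dn : (d < #|T|.-1)%N := nonmax_deg_lt eirr maxdegE deg_nonM w_nonM.
have k_gt0 : (0 < k)%N by have [u uM] := Mset_nonempty e T_gt0; apply/card_gt0P; exists u.
have cM2E (S : comPzRingType) : (cM2 e)%:R = bideg_cM2 #|T|%:R k%:R d%:R :> S.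
  by rewrite (cM2_bidegreed esym eirr maxdegE deg_nonM w_nonM) natr_bideg_cM2 //; lia.
have cM2Z : (cM2 e)%:Z = bideg_cM2 #|T|%:Z k%:Z d%:Z by rewrite -natz cM2E !natz.
have le_kn2 : (k + 2 <= #|T|)%N by lia.
split; [|split].
- by rewrite cM2Z; apply: bideg_cM2_le; rewrite ?lez_nat //; lia.
- rewrite cM2Z (isomorphic_joinP esym eirr maxdegE deg_nonM w_nonM).
  split=> [cM2_eq|->//]; apply/eqP; rewrite -eqz_nat -(@bideg_cM2_eq _ #|T|%:Z) ?ltz_nat //.
    exact/eqP.
  lia.
- have n_ge11R : 11 <= #|T|%:R :> R by rewrite ler_nat.
  have le_kn2R : k%:R <= #|T|%:R - 2 :> R by rewrite lerBrDr -natrD ler_nat.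
  have [eps [eps_bounds cM2_eps]] := bideg_cM2_eps_bound n_ge11R (ler0n _ k) le_kn2R.
  exists eps; split=> //; apply: le_trans cM2_eps.
  by rewrite cM2E bideg_cM2_le ?ler_nat //; lia.
Qed.
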